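(* Let $Z$ be a finite set, let $T_1,T_2$ be rooted $Z$-trees with $\mathrm{Seq}(T_1)=\mathrm{Seq}(T_2)$, and assume the subtree of $T_1$ rooted at the left child of its root has at least as many leaves as the subtree rooted at the right child. Let $Q_1,\dots,Q_k$ and $R_1,\dots,R_m$ be as defined in the context. Let $C\ge 4$ be a constant. Then at least one of the following holds: (i) there exist nodes $u\in T_1$, $v\in T_2$ and a leaf $x\in Z$ such that $x\notin \mathrm{Le}((T_1)_u)$, $x\notin\mathrm{Le}((T_2)_v)$ and $|\mathrm{Le}((T_1)_u)\cap \mathrm{Le}((T_2)_v)|\ge |Z|/C$; (ii) $|Q_j|\le \max(2|Z|/C,\,1)$ and $|R_l|\le\max(2|Z|/C,\,1)$ for all $1\le j\le k$, $1\le l\le m$.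
   Context: A rooted $Z$-tree is a binary rooted tree with a root of degree two (or a single node if $|Z|=1$), all other internal nodes of degree three, leaves bijectively labeled by $Z$, and each internal node having a designated left child and right child. For a node $v$, $T_v$ is the subtree rooted at $v$ and $\mathrm{Le}(\cdot)$ denotes the leaf set; the size $|T|$ of a tree is its number of leaves. $\mathrm{Seq}(T)$ is the left-to-right ordering of leaves given by the pre-order traversal of $T$ (visiting the left child before the right child). Let $P_1=(u_1,\dots,u_k)$ be the path in $T_1$ from its left-most leaf $u_1$ (first in $\mathrm{Seq}(T_1)$) to its root $u_k$; set $Q_1:=$ the one-leaf tree $u_1$ and, for $2\le j\le k$, $Q_j:=(T_1)_{c}$ where $c$ is the child of $u_j$ other than $u_{j-1}$. Let $P_2=(w_1,\dots,w_m)$ be the path in $T_2$ from its root $w_1$ to its right-most leaf $w_m$ (last in $\mathrm{Seq}(T_2)$); set $R_m:=$ the one-leaf tree $w_m$ and, for $1\le l<m$, $R_l:=(T_2)_{c}$ where $c$ is the child of $w_l$ other than $w_{l+1}$. *)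

From HB Require Import structures.
From mathcomp Require Import all_boot all_order all_algebra.
Set Implicit Arguments. Unset Strict Implicit. Unset Printing Implicit Defensive.

(* Rooted binary trees with ordered children (left, right) and leaves
   labelled by elements of A.  A rooted Z-tree is such a tree whose leaf
   sequence is duplicate-free, Z being its set of leaves. *)
Inductive tree (A : Type) : Type :=
| Leaf of A
| Node of tree A & tree A.
Arguments Leaf {A}.
Arguments Node {A}.

Section Trees.
Variable A : Type.

Fixpoint leaves (t : tree A) : seq A :=
  match t with
  | Leaf x => [:: x]
  | Node l r => leaves l ++ leaves r
  end.

(* All subtrees T_v, one per node v of T (including the root and the leaves). *)
Fixpoint subtrees (t : tree A) : seq (tree A) :=
  match t with
  | Leaf x => [:: t]
  | Node l r => t :: (subtrees l ++ subtrees r)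
  end.

(* Q_1, ..., Q_k : Q_1 is the left-most leaf, Q_j (j >= 2) is the subtree
   rooted at the child of u_j other than u_{j-1} along the path from the
   left-most leaf to the root. *)
Fixpoint Qseq (t : tree A) : seq (tree A) :=
  match t with
  | Leaf x => [:: t]
  | Node l r => Qseq l ++ [:: r]
  end.

(* R_1, ..., R_m : along the path from the root to the right-most leaf,
   R_l (l < m) is the subtree at the child of w_l other than w_{l+1},
   and R_m is the right-most leaf. *)
Fixpoint Rseq (t : tree A) : seq (tree A) :=
  match t with
  | Leaf x => [:: t]
  | Node l r => l :: Rseq r
  end.

Definition nleaves (t : tree A) : nat := size (leaves t).

(* the left subtree of the root has at least as many leaves as the right one
   (vacuous when the tree is a single leaf, i.e. |Z| = 1) *)
Definition left_heavy (t : tree A) : Prop :=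
  match t with
  | Leaf _ => True
  | Node l r => nleaves r <= nleaves l
  end.
End Trees.

From Stdlib Require List.
From Stdlib Require Import Classical.
From HB Require Import structures.
From mathcomp Require Import all_boot all_order all_algebra.
From mathcomp Require Import lra.
Import Order.TTheory GRing.Theory Num.Theory.
Local Open Scope ring_scope.

Set Implicit Arguments.
Unset Strict Implicit.

(* If T1 is a single leaf every Q_j and R_l has one leaf.
   Otherwise T1 = Node L1 R1 and T2 = Node L2 R2 have the same leaf sequence;
   write a for its first leaf (first leaf of L1 and of L2) and z for its last
   leaf (last leaf of R1 and of R2), and d = |Z|/C, so 4d <= |Z|.
   Assume (i) fails, i.e. every pair u in T1, v in T2 avoiding a common leaf
   has fewer than d shared leaves.  Then:
   - |L1 /\ L2| < d (witness z), hence |L1 /\ R2| >= |L1| - d >= d, and so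
     R1 and L2 are disjoint, otherwise a leaf of R1 /\ L2 witnesses (L1, R2);
   - a member Q of the Q-sequence with more than one leaf avoids a; its leaves
     split between L2 and R2; |Q /\ R2| < d (witness a), and |Q /\ L2| < d
     either by witness z (Q inside L1) or because Q = R1 is disjoint from L2;
     hence |Q| < 2d.  The R-sequence is handled symmetrically (witness z,
     then a, splitting between L1 and R1). *)

#[local] Arguments List.in_app_or {A l m a}.
#[local] Arguments List.in_or_app {A l m a}.

Section TreeFacts.
Variable A : eqType.
Implicit Types l r t u Q : tree A.

Fixpoint first_leaf t : A :=
  match t with Leaf x => x | Node l _ => first_leaf l end.

Fixpoint last_leaf t : A :=
  match t with Leaf x => x | Node _ r => last_leaf r end.

Lemma leaves_first t : leaves t = first_leaf t :: behead (leaves t).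
Proof. by elim: t => [//|l IHl r _] /=; rewrite IHl. Qed.

Lemma head_leaves x0 t : head x0 (leaves t) = first_leaf t.
Proof. by rewrite leaves_first. Qed.

Lemma last_leaves x0 t : last x0 (leaves t) = last_leaf t.
Proof. by elim: t x0 => [//|l IHl r IHr] x0 /=; rewrite last_cat IHr. Qed.

Lemma first_leaf_mem t : first_leaf t \in leaves t.
Proof. by rewrite leaves_first mem_head. Qed.

Lemma last_leaf_mem t : last_leaf t \in leaves t.
Proof. by elim: t => [x|l _ r IHr] /=; rewrite ?mem_seq1 ?mem_cat ?IHr ?orbT. Qed.

Lemma first_leaf_eq t u : leaves t = leaves u -> first_leaf t = first_leaf u.
Proof. by move=> E; rewrite -(head_leaves (first_leaf t) t) E head_leaves. Qed.

Lemma last_leaf_eq t u : leaves t = leaves u -> last_leaf t = last_leaf u.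
Proof. by move=> E; rewrite -(last_leaves (last_leaf t) t) E last_leaves. Qed.

Lemma subtrees_self t : List.In t (subtrees t).
Proof. by case: t => [x|l r]; left. Qed.

Lemma subtrees_left l r : List.In l (subtrees (Node l r)).
Proof. by right; apply: List.in_or_app; left; apply: subtrees_self. Qed.

Lemma subtrees_right l r : List.In r (subtrees (Node l r)).
Proof. by right; apply: List.in_or_app; right; apply: subtrees_self. Qed.

Lemma subtrees_leaves t u : List.In u (subtrees t) -> subseq (leaves u) (leaves t).
Proof.
elim: t => [x|l IHl r IHr]; first by case=> [<-|[]]; apply: subseq_refl.
case=> [<-|/List.in_app_or [Hu|Hu]]; first exact: subseq_refl.
- exact: subseq_trans (IHl Hu) (prefix_subseq _ _).
- exact: subseq_trans (IHr Hu) (suffix_subseq _ _).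
Qed.

Lemma subtrees_nleaves t u : List.In u (subtrees t) -> (nleaves u <= nleaves t)%N.
Proof. by move/subtrees_leaves/size_subseq. Qed.

Lemma Qseq_subtrees t Q : List.In Q (Qseq t) -> List.In Q (subtrees t).
Proof.
elim: t => [//|l IHl r _ /= /List.in_app_or [HQ|[<-|[]]]]; right.
  by apply: List.in_or_app; left; apply: IHl.
by apply: List.in_or_app; right; apply: subtrees_self.
Qed.

Lemma Rseq_subtrees t Q : List.In Q (Rseq t) -> List.In Q (subtrees t).
Proof.
elim: t => [//|l _ r IHr /= [<-|HQ]]; right; apply: List.in_or_app.
  by left; apply: subtrees_self.
by right; apply: IHr.
Qed.

Lemma uniq_cat_notin {s1 s2 : seq A} {y : A} :
  uniq (s1 ++ s2) -> y \in s2 -> y \notin s1.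
Proof.
by rewrite cat_uniq => /and3P[_ /hasPn disj _]; apply: disj.
Qed.

Lemma Qseq_first_leaf t Q : uniq (leaves t) -> List.In Q (Qseq t) ->
  (1 < nleaves Q)%N -> first_leaf t \notin leaves Q.
Proof.
elim: t => [x _ [<-|[]] //|l IHl r _ /= U /List.in_app_or [HQ|[<-|[]]] HQ1].
  by apply: IHl HQ HQ1; move: U; rewrite cat_uniq => /andP[].
by apply/negP => /(uniq_cat_notin U); rewrite first_leaf_mem.
Qed.

Lemma Rseq_last_leaf t Q : uniq (leaves t) -> List.In Q (Rseq t) ->
  (1 < nleaves Q)%N -> last_leaf t \notin leaves Q.
Proof.
elim: t => [x _ [<-|[]] //|l _ r IHr /= U [<-|HQ] HQ1].
  by apply: uniq_cat_notin U _; apply: last_leaf_mem.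
by apply: IHr HQ HQ1; move: U; rewrite cat_uniq => /and3P[].
Qed.

Definition overlap (s t : seq A) : nat := size [seq y <- s | y \in t].

Lemma overlapC (s t : seq A) : uniq s -> uniq t -> overlap s t = overlap t s.
Proof.
move=> Us Ut; apply/perm_size/uniq_perm; rewrite ?filter_uniq // => y.
by rewrite !mem_filter andbC.
Qed.

Lemma overlap_cat (s t1 t2 : seq A) : uniq (t1 ++ t2) ->
  {subset s <= t1 ++ t2} -> (overlap s t1 + overlap s t2)%N = size s.
Proof.
move=> U sub; rewrite /overlap !size_filter -(count_predC (mem t1) s).
congr (_ + _)%N; apply: eq_in_count => y /sub; rewrite mem_cat /=.
have U21 : uniq (t2 ++ t1) by rewrite uniq_catC.
case/orP=> [y1|y2]; last by rewrite y2 (uniq_cat_notin U y2).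
by rewrite y1 (negbTE (uniq_cat_notin U21 y1)).
Qed.

End TreeFacts.

Section NoLargeSeparatedPair.
Variables (R : realFieldType) (A : eqType) (L1 R1 L2 R2 : tree A) (d : R).
Let T1 := Node L1 R1.
Let T2 := Node L2 R2.

Hypothesis uniq_T1 : uniq (leaves L1 ++ leaves R1).
Hypothesis same_leaves : leaves L1 ++ leaves R1 = leaves L2 ++ leaves R2.
Hypothesis left_heavy_T1 : (nleaves R1 <= nleaves L1)%N.
Hypothesis d_quarter : 4 * d <= (nleaves T1)%:R.

(* Negation of alternative (i): every pair of subtrees u of T1, v of T2 that
   both miss some leaf x shares fewer than d leaves. *)
Hypothesis no_witness : forall u v x,
  List.In u (subtrees T1) -> List.In v (subtrees T2) -> x \in leaves T1 ->
  x \notin leaves u -> x \notin leaves v -> (overlap (leaves u) (leaves v))%:R < d.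

Let a := first_leaf L1.
Let z := last_leaf R1.

Lemma uniq_T2 : uniq (leaves L2 ++ leaves R2).
Proof. by rewrite -same_leaves. Qed.

Lemma a_eq : a = first_leaf L2.
Proof. exact: (first_leaf_eq (t := T1) (u := T2) same_leaves). Qed.

Lemma z_eq : z = last_leaf R2.
Proof. exact: (last_leaf_eq (t := T1) (u := T2) same_leaves). Qed.

Lemma a_in_L2 : a \in leaves L2.
Proof. by rewrite a_eq first_leaf_mem. Qed.

Lemma z_in_R2 : z \in leaves R2.
Proof. by rewrite z_eq last_leaf_mem. Qed.

(* The left parts share few leaves: the last leaf z misses both. *)
Lemma overlap_L1_L2 : (overlap (leaves L1) (leaves L2))%:R < d.
Proof.
apply: (no_witness (x := z)) (subtrees_left L1 R1) (subtrees_left L2 R2) _ _ _.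
- by rewrite /= mem_cat last_leaf_mem orbT.
- exact: uniq_cat_notin uniq_T1 (last_leaf_mem R1).
- exact: uniq_cat_notin uniq_T2 z_in_R2.
Qed.

(* L1 carries at least half of the leaves, hence at least 2d of them. *)
Lemma nleaves_L1 : 2 * d <= (nleaves L1)%:R.
Proof.
have : (nleaves R1)%:R <= (nleaves L1)%:R :> R by rewrite ler_nat.
by move: d_quarter; rewrite /nleaves /= size_cat natrD; lra.
Qed.

(* Hence L1 is mostly inside R2, and R1 cannot meet L2: a common leaf would
   witness the pair (L1, R2). *)
Lemma overlap_R1_L2 : overlap (leaves R1) (leaves L2) = 0%N.
Proof.
apply/eqP; rewrite /overlap size_filter -leqn0 leqNgt -has_count.
apply/hasP => -[x xR1 xL2].
have L1_sub : {subset leaves L1 <= leaves L2 ++ leaves R2}.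
  by move=> y yL1; rewrite -same_leaves mem_cat yL1.
have /(congr1 (fun k => k%:R : R)) := overlap_cat uniq_T2 L1_sub.
rewrite natrD => split_L1.
have : (overlap (leaves L1) (leaves R2))%:R < d.
  apply: (no_witness (x := x)) (subtrees_left L1 R1) (subtrees_right L2 R2) _ _ _.
  - by rewrite /= mem_cat xR1 orbT.
  - exact: uniq_cat_notin uniq_T1 xR1.
  - by apply/negP => /(uniq_cat_notin uniq_T2); rewrite xL2.
by move: overlap_L1_L2 nleaves_L1 split_L1; rewrite /nleaves; lra.
Qed.

(* The threshold is positive, since an overlap is never negative. *)
Lemma d_gt0 : 0 < d.
Proof. exact: le_lt_trans (ler0n _ _) overlap_L1_L2. Qed.

Lemma split_small (m1 m2 n : nat) : (m1 + m2)%N = n ->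
  m1%:R < d -> m2%:R < d -> n%:R <= Num.max (2 * d) 1.
Proof. by move=> <- m1_small m2_small; rewrite le_max natrD; apply/orP; left; lra. Qed.

(* Bound (ii) for the Q-sequence of T1: a non-trivial Q misses the first leaf a,
   so it shares < d leaves with R2 (witness a) and < d leaves with L2 (witness z
   if Q lies in L1; otherwise Q = R1, which misses L2). *)
Lemma Qseq_small Q : List.In Q (Qseq T1) -> (nleaves Q)%:R <= Num.max (2 * d) 1.
Proof.
move=> HQ; have [Q_le1|Q_gt1] := leqP (nleaves Q) 1.
  by rewrite le_max lern1 Q_le1 orbT.
have aQ : a \notin leaves Q := Qseq_first_leaf (t := T1) uniq_T1 HQ Q_gt1.
have Q_T1 := Qseq_subtrees HQ.
have Q_sub : {subset leaves Q <= leaves L2 ++ leaves R2}.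
  by move=> y /(mem_subseq (subtrees_leaves Q_T1)); rewrite -same_leaves.
apply: (split_small (overlap_cat uniq_T2 Q_sub)).
  case/List.in_app_or: HQ => [HQ|[<-|[]]]; last by rewrite overlap_R1_L2 d_gt0.
  have zQ : z \notin leaves Q.
    apply/negP => /(mem_subseq (subtrees_leaves (Qseq_subtrees HQ))).
    by apply/negP/(uniq_cat_notin uniq_T1)/last_leaf_mem.
  apply: (no_witness (x := z)) Q_T1 (subtrees_left L2 R2) _ zQ _.
  - by rewrite /= mem_cat last_leaf_mem orbT.
  - exact: uniq_cat_notin uniq_T2 z_in_R2.
apply: (no_witness (x := a)) Q_T1 (subtrees_right L2 R2) _ aQ _.
- by rewrite /= mem_cat first_leaf_mem.
- by apply/negP => /(uniq_cat_notin uniq_T2); rewrite a_in_L2.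
Qed.

(* Bound (ii) for the R-sequence of T2, symmetrically: a non-trivial Rt misses
   the last leaf z, so it shares < d leaves with L1 (witness z) and < d leaves
   with R1 (witness a if Rt lies in R2; otherwise Rt = L2, which misses R1). *)
Lemma Rseq_small Rt : List.In Rt (Rseq T2) -> (nleaves Rt)%:R <= Num.max (2 * d) 1.
Proof.
move=> HR; have [Rt_le1|Rt_gt1] := leqP (nleaves Rt) 1.
  by rewrite le_max lern1 Rt_le1 orbT.
have zR : z \notin leaves Rt.
  by rewrite z_eq; exact: (Rseq_last_leaf (t := T2) uniq_T2 HR Rt_gt1).
have R_T2 := Rseq_subtrees HR.
have R_sub2 := subtrees_leaves R_T2.
have R_sub : {subset leaves Rt <= leaves L1 ++ leaves R1}.
  by move=> y /(mem_subseq R_sub2); rewrite same_leaves.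
have uRt : uniq (leaves Rt) := subseq_uniq R_sub2 uniq_T2.
move: (uniq_T1); rewrite cat_uniq => /and3P[uL1 _ uR1].
have := overlap_cat uniq_T1 R_sub; rewrite !(overlapC uRt) // => split_Rt.
apply: (split_small split_Rt).
  apply: (no_witness (x := z)) (subtrees_left L1 R1) R_T2 _ _ zR.
  - by rewrite /= mem_cat last_leaf_mem orbT.
  - exact: uniq_cat_notin uniq_T1 (last_leaf_mem R1).
case: HR => [EL2|HR]; first by rewrite -EL2 overlap_R1_L2 d_gt0.
have aR : a \notin leaves Rt.
  apply/negP => /(mem_subseq (subtrees_leaves (Rseq_subtrees HR))).
  by move/(uniq_cat_notin uniq_T2); rewrite a_in_L2.
apply: (no_witness (x := a)) (subtrees_right L1 R1) R_T2 _ _ aR.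
- by rewrite /= mem_cat first_leaf_mem.
- by apply/negP => /(uniq_cat_notin uniq_T1); rewrite first_leaf_mem.
Qed.

End NoLargeSeparatedPair.

Theorem lemma1 (R : realFieldType) (A : eqType) (T1 T2 : tree A) (C : R) :
  uniq (leaves T1) ->
  leaves T1 = leaves T2 ->
  left_heavy T1 ->
  4 <= C ->
  (exists u v x,
      [/\ List.In u (subtrees T1), List.In v (subtrees T2), x \in leaves T1,
          x \notin leaves u & x \notin leaves v] /\
          (size (leaves T1))%:R / C <=
            (size [seq y <- leaves u | y \in leaves v])%:R)
  \/
  ((forall Q, List.In Q (Qseq T1) ->
      (nleaves Q)%:R <= Num.max (2 * (size (leaves T1))%:R / C) 1) /\
   (forall Rt, List.In Rt (Rseq T2) ->
      (nleaves Rt)%:R <= Num.max (2 * (size (leaves T1))%:R / C) 1)).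
Proof.
move=> U E LH C4.
case: T1 U E LH => [x|L1 R1] U E LH.
  right; split=> [Q [<-|[]]|Rt /Rseq_subtrees/subtrees_nleaves]; rewrite le_max.
    by rewrite lern1 orbT.
  by rewrite /nleaves -E lern1 => ->; rewrite orbT.
(* T2 cannot be a single leaf when T1 has two subtrees. *)
case: T2 E => [y|L2 R2] E.
  move: E; rewrite /= (leaves_first L1) (leaves_first R1) => -[_].
  by move/(congr1 size); rewrite size_cat addnS.
set d := (size (leaves (Node L1 R1)))%:R / C.
have d_quarter : 4 * d <= (nleaves (Node L1 R1))%:R.
  have C_gt0 : 0 < C by lra.
  have d_ge0 : 0 <= d by rewrite divr_ge0 ?ler0n // ltW.
  have dC : d * C = (nleaves (Node L1 R1))%:R by rewrite divfK ?gt_eqF.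
  by rewrite -dC; nra.
rewrite -mulrA -/d.
set W := (X in X \/ _); have [|no_wit] := classic W; [by left|right].
have no_witness u v x : List.In u (subtrees (Node L1 R1)) ->
    List.In v (subtrees (Node L2 R2)) -> x \in leaves (Node L1 R1) ->
    x \notin leaves u -> x \notin leaves v -> (overlap (leaves u) (leaves v))%:R < d.
  move=> Hu Hv Hx xu xv; rewrite ltNge; apply/negP => big.
  by apply: no_wit; exists u, v, x.
split=> [Q|Rt].
  exact: (Qseq_small U E LH d_quarter no_witness).
exact: (Rseq_small U E LH d_quarter no_witness).
Qed.
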